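(* Let $n\ge3$ and $0<q<1$. For every relationship network $G$ on $V$, $P_D(G)\le 1-(1-q)^2$. Consequently, if every agent $j$ satisfies one of: $|F_j|\ge2$; or $F_j=\varnothing$ and $|I_j|\ge2$; or $E_j=V\setminus\{j\}$, then $P_R(G)\ge P_D(G)$.
   Context: Let $V=\{1,\dots,n\}$. A relationship network $G$ assigns to every unordered pair of distinct agents exactly one of the symmetric relations friends, enemies, impartial; $F_j,E_j,I_j$ are the friends, enemies, impartials of $j$. Each agent is needy independently with probability $q$; $N$ is the random needy set; every agent $j$ reports truthfully $(N,F_j,E_j)$. Random dictatorship $g^R$: for agent $j$, choice set $C_j$: if $F_j\ne\varnothing$, $C_j=F_j\cap N$ if nonempty, else $F_j$; if $F_j=\varnothing\ne I_j$, $C_j=I_j\cap N$ if nonempty, else $I_j$; otherwise $C_j=E_j\cap N$ if nonempty, else $E_j$. $g^R_i=\frac1n\sum_{j\ne i}\mathbf 1[i\in C_j]/|C_j|$. Duples $g^D$: for agent $l$ and $j\ne l$, $\mathrm{lev}_l(j)=1,\dots,6$ according as $j\in F_l\cap N$, $F_l\setminus N$, $I_l\cap N$, $I_l\setminus N$, $E_l\cap N$, $E_l\setminus N$. For distinct $j,k$, agent $l\notin\{j,k\}$ votes for $j$ against $k$ if $\mathrm{lev}_l(j)<\mathrm{lev}_l(k)$; $x_{jk}$ counts these votes. $g^D_j(\{j,k\})=1,\tfrac12,0$ as $x_{jk}>,=,<x_{kj}$, $g^D_k(\{j,k\})=1-g^D_j(\{j,k\})$, and $g^D_i=\frac{2}{n(n-1)}\sum_{j\ne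 i}g^D_i(\{i,j\})$. $P_R(G)$ and $P_D(G)$ denote the probabilities that $g^R$, resp. $g^D$, select a needy agent, i.e. $\mathbb E[\sum_{i\in N}g_i]$ under truthful reports. *)

From HB Require Import structures.
From mathcomp Require Import all_boot all_order all_algebra.
Set Implicit Arguments. Unset Strict Implicit. Unset Printing Implicit Defensive.
Import Order.TTheory GRing.Theory Num.Theory.

Inductive relation3 := Friends | Enemies | Impartial.

Definition relation3_eqb (a b : relation3) : bool :=
  match a, b with
  | Friends, Friends | Enemies, Enemies | Impartial, Impartial => true
  | _, _ => false end.
Lemma relation3_eqP : Equality.axiom relation3_eqb.
Proof. by case; case; constructor. Qed.
HB.instance Definition _ := hasDecEq.Build relation3 relation3_eqP.

(* A relationship network on V = 'I_n : G j k is the relation between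
   agents j and k (meaningful for j != k; required symmetric there). *)
Definition network (n : nat) := 'I_n -> 'I_n -> relation3.

Definition is_network n (G : network n) : Prop :=
  forall j k : 'I_n, j != k -> G j k = G k j.

Section Defs.
Variable n : nat.
Variable G : network n.

Definition friends (j : 'I_n) : {set 'I_n} := [set k | (k != j) && (G j k == Friends)].
Definition enemies (j : 'I_n) : {set 'I_n} := [set k | (k != j) && (G j k == Enemies)].
Definition impartials (j : 'I_n) : {set 'I_n} := [set k | (k != j) && (G j k == Impartial)].

Definition prefer (A N : {set 'I_n}) : {set 'I_n} :=
  if A :&: N != set0 then A :&: N else A.

Definition choice_set (N : {set 'I_n}) (j : 'I_n) : {set 'I_n} :=
  if friends j != set0 then prefer (friends j) N
  else if impartials j != set0 then prefer (impartials j) N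
  else prefer (enemies j) N.

Variable R : realFieldType.
Local Open Scope ring_scope.

Definition gR (N : {set 'I_n}) (i : 'I_n) : R :=
  n%:R^-1 * \sum_(j : 'I_n | j != i)
     ((i \in choice_set N j)%:R / #|choice_set N j|%:R).

Definition lev (N : {set 'I_n}) (l j : 'I_n) : nat :=
  if j \in friends l then (if j \in N then 1 else 2)%N
  else if j \in impartials l then (if j \in N then 3 else 4)%N
  else (if j \in N then 5 else 6)%N.

Definition votes (N : {set 'I_n}) (j k : 'I_n) : nat :=
  #|[set l : 'I_n | [&& l != j, l != k & (lev N l j < lev N l k)%N]]|.

Definition gDpair (N : {set 'I_n}) (j k : 'I_n) : R :=
  if (votes N k j < votes N j k)%N then 1
  else if votes N j k == votes N k j then 2^-1 else 0.

Definition gD (N : {set 'I_n}) (i : 'I_n) : R :=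
  2 / (n * (n - 1))%:R * \sum_(j : 'I_n | j != i) gDpair N i j.

(* Probability of selecting a needy agent: N random, each agent needy
   independently with probability q. *)
Definition Pneedy (q : R) (g : {set 'I_n} -> 'I_n -> R) : R :=
  \sum_(N : {set 'I_n}) (q ^+ #|N| * (1 - q) ^+ (n - #|N|)) *
     \sum_(i in N) g N i.

Definition P_R (q : R) : R := Pneedy q gR.
Definition P_D (q : R) : R := Pneedy q gD.

End Defs.

From HB Require Import structures.
From mathcomp Require Import all_boot all_order all_algebra.
From mathcomp Require Import ring zify.
Set Implicit Arguments. Unset Strict Implicit.
Import Order.TTheory GRing.Theory Num.Theory.
Local Open Scope ring_scope.

(* Both bounds go through the probability [1 - (1 - q)^2] that a fixed pair of
   agents contains a needy one.  Under duples the two entries of a pair share a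
   total weight of 1, and a needy agent can only collect it when the pair meets
   [N]; averaging over pairs gives [P_D <= 1 - (1 - q)^2].  Under random
   dictatorship each dictator's choice set is [prefer A N] for a fixed set [A]
   of at least two agents, and it selects a needy agent with probability 1 as
   soon as [A] meets [N], in particular when any two chosen members of [A] do;
   hence [P_R >= 1 - (1 - q)^2]. *)

Lemma setI2_eq0 (T : finType) (i j : T) (N : {set T}) :
  ([set i; j] :&: N == set0) = (i \notin N) && (j \notin N).
Proof. by rewrite setIUl setU_eq0 !setI_eq0 !disjoints1. Qed.

Lemma sum_offdiag_swap (V : nmodType) (n : nat) (F : 'I_n -> 'I_n -> V) :
  \sum_i \sum_(j | j != i) F i j = \sum_i \sum_(j | j != i) F j i.
Proof.
rewrite (exchange_big_dep xpredT) //=; apply: eq_bigr => i _.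
by apply: eq_bigl => j; rewrite eq_sym.
Qed.

Lemma sum_offdiag_const (V : nmodType) (n : nat) (x : V) :
  \sum_(i : 'I_n) \sum_(j | j != i) x = x *+ (n * (n - 1)).
Proof.
rewrite (eq_bigr (fun _ => x *+ (n - 1))) => [|i _].
  by rewrite sumr_const card_ord -mulrnA mulnC.
rewrite (eq_bigl (mem [set~ i])) => [|j]; last by rewrite !inE.
by rewrite sumr_const cardsC1 card_ord subn1.
Qed.

Section NeedyWeight.
Variables (R : comPzRingType) (n : nat) (q : R).

Definition needy_weight (N : {set 'I_n}) : R := q ^+ #|N| * (1 - q) ^+ (n - #|N|).

Lemma sum_set_prod (F : 'I_n -> bool -> R) :
  \sum_(N : {set 'I_n}) \prod_x F x (x \in N) = \prod_x (F x true + F x false).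
Proof.
under [RHS]eq_bigr do rewrite -big_bool.
rewrite bigA_distr_bigA /= (reindex (fun f : {ffun 'I_n -> bool} => [set x | f x])) /=.
  by apply: eq_bigr => f _; apply: eq_bigr => x _; rewrite inE.
exists (fun A : {set 'I_n} => [ffun x => x \in A]) => [f _|A _].
  by apply/ffunP => x; rewrite ffunE inE.
by apply/setP => x; rewrite inE ffunE.
Qed.

Lemma sum_needy_weight_disjoint (S : {set 'I_n}) :
  \sum_N needy_weight N * (S :&: N == set0)%:R = (1 - q) ^+ #|S|.
Proof.
pose F x (b : bool) := if b then (if x \in S then 0 else q) else 1 - q.
have weight_prod N : needy_weight N * (S :&: N == set0)%:R = \prod_x F x (x \in N).
  rewrite (bigID (mem N)) /=.
  have -> : \prod_(x | x \notin N) F x (x \in N) = (1 - q) ^+ (n - #|N|).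
    rewrite (eq_bigr (fun _ => 1 - q)); last by move=> x /negbTE ->.
    have card_notin : (n - #|N| = #|[pred x | x \notin N]|)%N.
      have := cardsC N; rewrite card_ord.
      have -> : #|~: N| = #|[pred x | x \notin N]| by apply: eq_card => x; rewrite inE.
      lia.
    by rewrite prodr_const card_notin.
  have [SN0|/set0Pn[x]] := eqVneq (S :&: N) set0.
    rewrite mulr1 (eq_bigr (fun _ => q)) ?prodr_const // => x xN.
    rewrite /F xN; case: ifP => // xS.
    by have := in_set0 x; rewrite -SN0 inE xS xN.
  rewrite inE => /andP[xS xN].
  by rewrite (bigD1 x) //= /F xN xS !mul0r mulr0.
under eq_bigr do rewrite weight_prod.
rewrite sum_set_prod (eq_bigr (fun x => if x \in S then 1 - q else 1)).
  by rewrite -big_mkcond prodr_const.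
by move=> x _; rewrite /F; case: ifP; rewrite ?add0r // addrC subrK.
Qed.

Lemma sum_needy_weight : \sum_N needy_weight N = 1.
Proof.
rewrite -(expr0 (1 - q)) -(cards0 'I_n) -sum_needy_weight_disjoint.
by apply: eq_bigr => N _; rewrite set0I eqxx mulr1.
Qed.

Lemma sum_needy_weight_meet (S : {set 'I_n}) :
  \sum_N needy_weight N * (S :&: N != set0)%:R = 1 - (1 - q) ^+ #|S|.
Proof.
rewrite -sum_needy_weight_disjoint -[X in X - _]sum_needy_weight -sumrB.
by apply: eq_bigr => N _; case: eqP => _; rewrite /= ?mulr0 ?mulr1 ?subrr ?subr0.
Qed.

Lemma sum_needy_weight_meet2 (i j : 'I_n) : i != j ->
  \sum_N needy_weight N * ([set i; j] :&: N != set0)%:R = 1 - (1 - q) ^+ 2.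
Proof. by move=> ij; rewrite sum_needy_weight_meet cards2 ij. Qed.

End NeedyWeight.

Lemma needy_weight_ge0 (R : numDomainType) n (q : R) (N : {set 'I_n}) :
  0 <= q <= 1 -> 0 <= needy_weight q N.
Proof. by case/andP=> q0 q1; rewrite mulr_ge0 ?exprn_ge0 ?subr_ge0. Qed.

Section Duples.
Variables (R : realFieldType) (n : nat) (G : network n).
Implicit Types (N : {set 'I_n}) (i j : 'I_n).

Lemma gDpair_add_swap N i j : gDpair G R N i j + gDpair G R N j i = 1.
Proof.
by rewrite /gDpair; case: ltngtP => _; rewrite ?addr0 ?add0r //; field.
Qed.

Lemma gDpair_ge0 N i j : 0 <= gDpair G R N i j.
Proof. by rewrite /gDpair; case: ifP => _ //; case: ifP => _ //; rewrite invr_ge0. Qed.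

Lemma needy_gDpair_le N i j :
  (i \in N)%:R * gDpair G R N i j + (j \in N)%:R * gDpair G R N j i
  <= ([set i; j] :&: N != set0)%:R.
Proof.
have sum1 := gDpair_add_swap N i j.
rewrite setI2_eq0 negb_and !negbK.
case: (i \in N); case: (j \in N); rewrite /= ?mulr1n ?mul1r ?mul0r ?addr0 ?add0r //.
- by rewrite sum1.
- by rewrite -sum1 lerDl gDpair_ge0.
- by rewrite -sum1 lerDr gDpair_ge0.
Qed.

Lemma sum_needy_gD_le N :
  \sum_(i in N) gD G R N i
  <= (n * (n - 1))%:R^-1 * \sum_i \sum_(j | j != i) ([set i; j] :&: N != set0)%:R.
Proof.
set T := \sum_i \sum_(j | j != i) (i \in N)%:R * gDpair G R N i j.
have -> : \sum_(i in N) gD G R N i = (n * (n - 1))%:R^-1 * (T + T).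
  have -> : (n * (n - 1))%:R^-1 * (T + T) = 2 / (n * (n - 1))%:R * T by ring.
  rewrite /T big_distrr big_mkcond /=; apply: eq_bigr => i _.
  case: (i \in N); last by rewrite big1 ?mulr0 // => j _; rewrite mul0r.
  by rewrite /gD; congr (_ * _); apply: eq_bigr => j _; rewrite mul1r.
rewrite ler_wpM2l ?invr_ge0 ?ler0n // {2}/T sum_offdiag_swap -big_split /=.
by apply: ler_sum => i _; rewrite -big_split; apply: ler_sum => j _; apply: needy_gDpair_le.
Qed.

Lemma P_D_le (q : R) : (1 < n)%N -> 0 <= q <= 1 -> P_D G q <= 1 - (1 - q) ^+ 2.
Proof.
move=> n_gt1 q01; set m := (n * (n - 1))%:R : R.
have m_neq0 : m != 0 by rewrite pnatr_eq0 muln_eq0 negb_or; apply/andP; split; apply/eqP; lia.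
apply: (le_trans (y := \sum_N needy_weight q N *
   (m^-1 * \sum_i \sum_(j | j != i) ([set i; j] :&: N != set0)%:R))).
  by apply: ler_sum => N _; rewrite ler_wpM2l ?needy_weight_ge0 ?sum_needy_gD_le.
have -> : \sum_(N : {set 'I_n}) needy_weight q N *
    (m^-1 * \sum_(i : 'I_n) \sum_(j | j != i) ([set i; j] :&: N != set0)%:R) =
    m^-1 * \sum_(i : 'I_n) \sum_(j | j != i) (1 - (1 - q) ^+ 2).
  under eq_bigr do rewrite mulrCA.
  rewrite -big_distrr /=; congr (_ * _).
  under eq_bigr do rewrite big_distrr /=.
  rewrite exchange_big; apply: eq_bigr => i _.
  under eq_bigr do rewrite big_distrr /=.
  rewrite exchange_big; apply: eq_bigr => j ji /=.
  by rewrite sum_needy_weight_meet2 // eq_sym.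
by rewrite sum_offdiag_const -mulr_natr mulrCA mulVf ?mulr1.
Qed.

End Duples.

Section RandomDictatorship.
Variables (R : realFieldType) (n : nat) (G : network n).
Implicit Types (N A : {set 'I_n}) (i j : 'I_n).

Lemma choice_set_notin N j : j \notin choice_set G N j.
Proof.
rewrite /choice_set /prefer.
by repeat case: ifP => _; rewrite !inE eqxx ?andbF.
Qed.

Lemma sum_needy_gR N :
  \sum_(i in N) gR G R N i =
  n%:R^-1 * \sum_j (#|choice_set G N j :&: N|%:R / #|choice_set G N j|%:R).
Proof.
rewrite /gR -mulr_sumr; congr (_ * _).
pose share i j := (i \in choice_set G N j)%:R / #|choice_set G N j|%:R : R.
have share_diag i : \sum_(j | j != i) share i j = \sum_j share i j.
  by rewrite [RHS](bigD1 i) //= /share (negbTE (choice_set_notin N i)) mul0r add0r.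
rewrite (eq_bigr _ (fun i _ => share_diag i)) exchange_big /=; apply: eq_bigr => j _.
rewrite -mulr_suml -natr_sum -big_mkcondr /= sum1_card.
by congr (_%:R / _); apply: eq_card => i; rewrite !inE andbC.
Qed.

Lemma prefer_needy_share_ge A N a b : a \in A -> b \in A ->
  ([set a; b] :&: N != set0)%:R <= #|prefer A N :&: N|%:R / #|prefer A N|%:R :> R.
Proof.
move=> aA bA; rewrite /prefer; case: ifP => [AN_neq0|/negbFE AN_eq0].
  rewrite -setIA setIid divff ?lern1 ?leq_b1 //.
  by rewrite pnatr_eq0 cards_eq0.
have -> : [set a; b] :&: N == set0.
  by rewrite -subset0 -(eqP AN_eq0) setSI // subUset !sub1set aA bA.
by rewrite divr_ge0 ?ler0n.
Qed.

Definition top_class j : {set 'I_n} :=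
  if friends G j != set0 then friends G j
  else if impartials G j != set0 then impartials G j
  else enemies G j.

Lemma choice_set_top_class N j : choice_set G N j = prefer (top_class j) N.
Proof. by rewrite /choice_set /top_class; case: ifP => //; case: ifP. Qed.

Lemma top_class_gt1 j : (2 < n)%N ->
  [|| (2 <= #|friends G j|)%N,
      (friends G j == set0) && (2 <= #|impartials G j|)%N
    | enemies G j == [set: 'I_n] :\ j] ->
  (1 < #|top_class j|)%N.
Proof.
move=> n_gt2; rewrite /top_class.
case/or3P => [F_ge2|/andP[/eqP -> I_ge2]|/eqP E_all].
- by rewrite -card_gt0 (ltnW F_ge2).
- by rewrite eqxx /= -card_gt0 (ltnW I_ge2).
have all_enemies k : k != j -> G j k = Enemies.
  move=> kj; have : k \in enemies G j by rewrite E_all !inE kj.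
  by rewrite inE kj => /eqP.
have only_enemies r : r != Enemies -> [set k | (k != j) && (G j k == r)] = set0.
  move=> rE; apply/setP => k; rewrite !inE.
  by case: (eqVneq k j) => //= kj; rewrite all_enemies // eq_sym (negbTE rE).
have -> : friends G j = set0 by exact: only_enemies.
have -> : impartials G j = set0 by exact: only_enemies.
rewrite eqxx /= E_all.
have := cardsD1 j [set: 'I_n]; rewrite cardsT card_ord in_setT add1n => n_eq.
by move: n_gt2; rewrite {1}n_eq ltnS.
Qed.

Lemma P_R_ge (q : R) : (0 < n)%N -> 0 <= q <= 1 ->
  (forall j, (1 < #|top_class j|)%N) -> 1 - (1 - q) ^+ 2 <= P_R G q.
Proof.
move=> n_gt0 q01 top_gt1.
have n_neq0 : n%:R != 0 :> R by rewrite pnatr_eq0 -lt0n.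
have dictator_ge j : 1 - (1 - q) ^+ 2 <= \sum_(N : {set 'I_n}) needy_weight q N *
    (#|choice_set G N j :&: N|%:R / #|choice_set G N j|%:R).
  have [a [b [aA bA ab]]] := card_gt1P (top_gt1 j).
  rewrite -(sum_needy_weight_meet2 q ab); apply: ler_sum => N _.
  by rewrite ler_wpM2l ?needy_weight_ge0 // choice_set_top_class prefer_needy_share_ge.
rewrite /P_R /Pneedy.
under eq_bigr => N _ do rewrite sum_needy_gR mulrCA big_distrr /=.
rewrite -big_distrr exchange_big /=.
apply: le_trans (ler_wpM2l _ (ler_sum _ (fun j _ => dictator_ge j))); last first.
  by rewrite invr_ge0 ler0n.
by rewrite sumr_const card_ord -(mulr_natr (1 - _)) mulrCA mulVf ?mulr1.
Qed.

End RandomDictatorship.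

Theorem mainTheorem7 (R : realFieldType) (n : nat) (q : R)
  (hn : (3 <= n)%N) (hq0 : 0 < q) (hq1 : q < 1) :
  (forall G : network n, is_network G -> P_D G q <= 1 - (1 - q) ^+ 2) /\
  (forall G : network n, is_network G ->
     (forall j : 'I_n,
        [|| (2 <= #|friends G j|)%N,
            (friends G j == set0) && (2 <= #|impartials G j|)%N
          | enemies G j == [set: 'I_n] :\ j]) ->
     P_D G q <= P_R G q).
Proof.
have q01 : 0 <= q <= 1 by rewrite !ltW.
have n_gt1 : (1 < n)%N by rewrite ltnW.
(* Neither bound uses the symmetry of [G]. *)
split=> G _; first exact: P_D_le.
move=> G_wide; apply: le_trans (P_D_le G n_gt1 q01) _.
by apply: P_R_ge (ltnW n_gt1) q01 _ => j; exact: top_class_gt1 hn (G_wide j).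
Qed.
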